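(* Let $d\ge1$ and $n\ge 3d+2$ be integers. If $G$ is an $n$-vertex graph with $d\le\delta(G)\le\Delta(G)\le n-2d-1$, then $G$ admits a matching of size $d+1$.
   Context: $G$ is a finite simple graph; $\delta(G)$ and $\Delta(G)$ denote its minimum and maximum degree. A matching is a set of pairwise vertex-disjoint edges; its size is the number of edges. *)

From mathcomp Require Import all_boot.
Set Implicit Arguments. Unset Strict Implicit. Unset Printing Implicit Defensive.

Definition simple_graph (T : finType) (e : rel T) : Prop :=
  irreflexive e /\ symmetric e.

Definition deg (T : finType) (e : rel T) (x : T) : nat := #|[set y | e x y]|.

(* Minimum and maximum degree (over a nonempty vertex set; 0 for empty T). *)
Definition min_deg (T : finType) (e : rel T) : nat :=
  \big[minn/#|T|]_(x : T) deg e x.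
Definition max_deg (T : finType) (e : rel T) : nat :=
  \max_(x : T) deg e x.

Definition is_edge (T : finType) (e : rel T) (E : {set T}) : bool :=
  [exists x, exists y, e x y && (E == [set x; y])].

Definition matching (T : finType) (e : rel T) (M : {set {set T}}) : bool :=
  [forall E in M, is_edge e E] &&
  [forall E1 in M, forall E2 in M, (E1 != E2) ==> [disjoint E1 & E2]].

From mathcomp Require Import all_boot all_order zify.
Set Implicit Arguments. Unset Strict Implicit. Unset Printing Implicit Defensive.

(* Let M be a maximum matching and U the set of the n - 2|M| vertices it leaves
   uncovered.  U is independent, so all edges at U go to covered vertices.  If y
   has a neighbour u' in U, its partner x in M has at most one neighbour in U:
   otherwise one of them, u, differs from u' and u x y u' is an augmenting path.
   So each edge of M receives at most max(Delta, 2) edges from U, and counting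
   the edges at U gives (n - 2|M|) delta <= |M| max(Delta, 2).  This is
   impossible when |M| <= d, n >= 3d + 2 and Delta <= n - 2d - 1. *)

Section Matchings.
Variables (T : finType) (e : rel T).
Implicit Types (M : {set {set T}}) (A E : {set T}).

Lemma matchingP M :
  reflect ({in M, forall E, is_edge e E} /\ trivIset M) (matching e M).
Proof.
apply: (iffP andP) => [[/forall_inP edgeM disjM]|[edgeM /trivIsetP disjM]].
  split=> //; apply/trivIsetP => E1 E2 E1M E2M.
  by move/forall_inP: disjM => /(_ _ E1M) /forall_inP /(_ _ E2M) /implyP.
split; first exact/forall_inP.
by apply/forall_inP => E1 E1M; apply/forall_inP => E2 E2M; apply/implyP/disjM.
Qed.

Lemma is_edgeP E : reflect (exists x y, e x y /\ E = [set x; y]) (is_edge e E).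
Proof.
apply: (iffP existsP) => [[x /existsP [y /andP [exy /eqP ->]]]|[x [y [exy ->]]]].
  by exists x, y.
by exists x; apply/existsP; exists y; rewrite exy eqxx.
Qed.

Lemma matching0 : matching e set0.
Proof. by apply/matchingP; split=> [E|]; rewrite ?inE // /trivIset /cover !big_set0 cards0. Qed.

Lemma matchingS M1 M2 : M1 \subset M2 -> matching e M2 -> matching e M1.
Proof.
move=> sM12 /matchingP [edgeM2 disjM2]; apply/matchingP; split.
  by move=> E /(subsetP sM12) /edgeM2.
exact: trivIsetS disjM2.
Qed.

Lemma cover_setU1 A M : cover (A |: M) = A :|: cover M.
Proof. by rewrite /cover bigcup_setU big_set1. Qed.

Lemma notin_cover M E x : E \in M -> x \notin cover M -> x \notin E.
Proof. by move=> EM; apply: contra; apply/subsetP/bigcup_sup. Qed.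

Lemma matchingU1 M x y :
    matching e M -> e x y -> x \notin cover M -> y \notin cover M ->
  matching e ([set x; y] |: M) /\ #|[set x; y] |: M| = #|M|.+1.
Proof.
move=> /matchingP [edgeM disjM] exy xM yM.
have disj_xy : {in M, forall E, [disjoint [set x; y] & E]}.
  move=> E EM; rewrite disjoints_subset subUset !sub1set !inE.
  by rewrite !(notin_cover EM).
have set0M : set0 \notin M.
  by apply/negP => /edgeM /is_edgeP [a [b [_ /setP /(_ a)]]]; rewrite !inE eqxx.
have [disjM' xyM] := trivIsetU1 disj_xy disjM set0M.
rewrite cardsU1 xyM; split=> //; apply/matchingP; split=> // E.
by case/setU1P => [->|/edgeM //]; apply/is_edgeP; exists x, y.
Qed.

Lemma matching_augment M x y u u' :
    matching e M -> [set x; y] \in M -> x != y -> e x u -> e y u' -> u != u' ->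
    u \notin cover M -> u' \notin cover M ->
  exists2 M', matching e M' & #|M'| = #|M|.+1.
Proof.
move=> mM xyM xy exu eyu' uu' uM u'M.
set M1 := M :\ [set x; y].
have mM1 : matching e M1 by apply: matchingS mM; apply: subD1set.
have cardM1 : #|M1|.+1 = #|M| by rewrite [RHS](cardsD1 [set x; y]) xyM.
have coverM1 : cover M1 = cover M :\: [set x; y].
  by rewrite coverD1 //; case/matchingP: mM.
have [xcM ycM] : x \in cover M /\ y \in cover M.
  by split; apply/bigcupP; exists [set x; y]; rewrite // !inE eqxx ?orbT.
have [mM2 cardM2] : matching e ([set x; u] |: M1) /\ #|[set x; u] |: M1| = #|M1|.+1.
  by apply: matchingU1 => //; rewrite coverM1 !inE ?eqxx //= (negbTE uM) andbF.
have coverM2 : cover ([set x; u] |: M1) = [set x; u] :|: (cover M :\: [set x; y]).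
  by rewrite cover_setU1 coverM1.
have yM2 : y \notin cover ([set x; u] |: M1).
  rewrite coverM2 !inE eqxx orbT /= orbF (eq_sym y) negb_or xy /=.
  by apply: contraNneq uM => <-.
have u'M2 : u' \notin cover ([set x; u] |: M1).
  rewrite coverM2 !inE (negbTE u'M) andbF orbF negb_or (eq_sym u' u) uu' andbT.
  by apply: contraNneq u'M => ->.
have [mM3 cardM3] := matchingU1 mM2 eyu' yM2 u'M2.
by exists ([set y; u'] |: ([set x; u] |: M1)); rewrite // cardM3 cardM2 cardM1.
Qed.

Lemma exists_max_matching :
  exists2 M, matching e M & forall M', matching e M' -> #|M'| <= #|M|.
Proof. by case: (arg_maxnP (fun M => #|M|) matching0) => M mM maxM; exists M. Qed.

Lemma submatching_of_card M k :
  matching e M -> k <= #|M| -> exists2 M', matching e M' & #|M'| = k.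
Proof.
move=> mM /card_geqP [s [s_uniq s_size sM]].
exists [set E in s]; last by rewrite cardsE (card_uniqP s_uniq).
by apply: matchingS mM; apply/subsetP => E; rewrite inE => /sM.
Qed.

Hypothesis e_irr : irreflexive e.

Lemma adj_neq x y : e x y -> x != y.
Proof. by apply: contraTneq => ->; rewrite e_irr. Qed.

Lemma card_cover_matching M : matching e M -> #|cover M| = 2 * #|M|.
Proof.
case/matchingP => edgeM disjM.
have /eqP -> : #|cover M| == \sum_(E in M) #|E| by rewrite (leq_card_cover M).2.
rewrite mulnC -sum_nat_const.
by apply: eq_bigr => E /edgeM /is_edgeP [x [y [/adj_neq xy ->]]]; rewrite cards2 xy.
Qed.

End Matchings.

Section Degrees.
Variables (T : finType) (e : rel T).
Implicit Types (A B : {set T}).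

Definition deg_in A x := #|[set y in A | e x y]|.

Lemma deg_inE A x : deg_in A x = \sum_(y in A) e x y.
Proof.
by rewrite /deg_in -sum1dep_card big_mkcondr; apply: eq_bigr => y _; case: (e x y).
Qed.

Lemma deg_in_le_deg A x : deg_in A x <= deg e x.
Proof. by apply: subset_leq_card; apply/subsetP => y; rewrite !inE => /andP []. Qed.

Lemma deg_le_max_deg x : deg e x <= max_deg e.
Proof. exact: leq_bigmax. Qed.

Lemma min_deg_le_deg x : min_deg e <= deg e x.
Proof.
by rewrite /min_deg -minEnat -leEnat Order.TotalTheory.bigmin_le.
Qed.

Hypothesis e_sym : symmetric e.

Lemma sum_deg_in A B : \sum_(x in A) deg_in B x = \sum_(y in B) deg_in A y.
Proof.
under eq_bigr do rewrite deg_inE; rewrite exchange_big.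
by apply: eq_bigr => y _; rewrite deg_inE; under eq_bigr do rewrite e_sym.
Qed.

End Degrees.

Section MaximumMatching.
Variables (T : finType) (e : rel T).
Hypotheses (e_irr : irreflexive e) (e_sym : symmetric e).
Variable M : {set {set T}}.
Hypotheses (mM : matching e M) (maxM : forall M', matching e M' -> #|M'| <= #|M|).

Local Notation U := (~: cover M).

Lemma uncovered_nonadjacent u v : u \notin cover M -> v \notin cover M -> ~~ e u v.
Proof.
move=> uM vM; apply/negP => euv.
have [mM' cardM'] := matchingU1 mM euv uM vM.
by have := maxM mM'; rewrite cardM' ltnn.
Qed.

Lemma deg_in_uncovered_le1 x y :
  [set x; y] \in M -> x != y -> 0 < deg_in e U y -> deg_in e U x <= 1.
Proof.
move=> xyM xy /card_gt0P [u']; rewrite !inE => /andP [u'M eyu'].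
rewrite leqNgt; apply/negP => /card_gt1P [a [b [aN bN ab]]].
have [u [uM exu uu']] : exists u, [/\ u \notin cover M, e x u & u != u'].
  move: aN bN; rewrite !inE => /andP [aM exa] /andP [bM exb].
  by case: (eqVneq a u') ab => [-> bu'|au' _]; [exists b; rewrite eq_sym | exists a].
have [M' mM' cardM'] := matching_augment mM xyM xy exu eyu' uu' uM u'M.
by have := maxM mM'; rewrite cardM' ltnn.
Qed.

Lemma deg_in_uncovered_edge x y :
  [set x; y] \in M -> e x y -> deg_in e U x + deg_in e U y <= maxn (max_deg e) 2.
Proof.
move=> xyM /(adj_neq e_irr) xy.
have yxM : [set y; x] \in M by rewrite setUC.
have yx : y != x by rewrite eq_sym.
have x_le := leq_trans (deg_in_le_deg e U x) (deg_le_max_deg e x).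
have y_le := leq_trans (deg_in_le_deg e U y) (deg_le_max_deg e y).
case: (posnP (deg_in e U x)) => [|x_gt0]; first lia.
case: (posnP (deg_in e U y)) => [|y_gt0]; first lia.
have := deg_in_uncovered_le1 xyM xy y_gt0.
have := deg_in_uncovered_le1 yxM yx x_gt0.
lia.
Qed.

Lemma sum_deg_in_uncovered :
  \sum_(v in cover M) deg_in e U v <= #|M| * maxn (max_deg e) 2.
Proof.
have /matchingP [edgeM disjM] := mM.
rewrite big_trivIset // -sum_nat_const; apply: leq_sum => E EM.
have /is_edgeP [x [y [exy defE]]] := edgeM E EM.
have xy := adj_neq e_irr exy.
rewrite defE big_setU1 ?inE //= big_set1.
by apply: deg_in_uncovered_edge; rewrite -?defE.
Qed.

Lemma sum_deg_uncovered : \sum_(u in U) deg e u = \sum_(v in cover M) deg_in e U v.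
Proof.
rewrite -sum_deg_in //; apply: eq_bigr => u; rewrite inE => uM.
apply: eq_card => v; rewrite !inE.
by case: (boolP (v \in cover M)) => //= vM; rewrite (negbTE (uncovered_nonadjacent uM vM)).
Qed.

Lemma card_uncovered_mul_min_deg :
  #|U| * min_deg e <= #|M| * maxn (max_deg e) 2.
Proof.
apply: leq_trans sum_deg_in_uncovered; rewrite -sum_deg_uncovered -sum_nat_const.
by apply: leq_sum => u _; apply: min_deg_le_deg.
Qed.

Lemma max_matching_card_gt d :
    1 <= d -> 3 * d + 2 <= #|T| -> d <= min_deg e -> max_deg e <= #|T| - 2 * d - 1 ->
  d < #|M|.
Proof.
move=> d_gt0 n_ge min_ge max_le; rewrite ltnNge; apply/negP => M_le.
have cardU : #|U| + 2 * #|M| = #|T|.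
  by rewrite -(card_cover_matching e_irr mM) addnC cardsC.
have := leq_trans (leq_mul (leqnn #|U|) min_ge) card_uncovered_mul_min_deg.
move: cardU; set k := #|U|; set m := #|M|; set D := max_deg e; set n := #|T|.
case: (leqP D 2) => [D_le2 | D_gt2] cardU; first nia.
have : m * D <= d * (n - 2 * d - 1) by apply: leq_mul.
nia.
Qed.

End MaximumMatching.

Theorem lemma2p8 (T : finType) (e : rel T) (d : nat) :
  simple_graph e ->
  1 <= d ->
  3 * d + 2 <= #|T| ->
  d <= min_deg e ->
  max_deg e <= #|T| - 2 * d - 1 ->
  exists M : {set {set T}}, matching e M && (#|M| == d.+1).
Proof.
case=> e_irr e_sym d_gt0 n_ge min_ge max_le.
have [M mM maxM] := exists_max_matching e.
have M_gt := max_matching_card_gt e_irr e_sym mM maxM d_gt0 n_ge min_ge max_le.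
have [M' mM' cardM'] := submatching_of_card mM M_gt.
by exists M'; rewrite mM' cardM' eqxx.
Qed.
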